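(* Let $(X,\tau_\delta)_{\delta>0}$ be a simple Hilbert dilation system, with the orthonormal basis $e_1,\dots,e_d$ of $X$ satisfying $\tau_\delta e_j=\delta^{-\nu_j}e_j$, $\nu_1<\dots<\nu_d$. Let $H$ be a $k$-dimensional subspace, $1\le k\le d$. Suppose $\epsilon\in(0,1/2)$, $\delta,\delta'>0$ with $\delta\ge\epsilon^{-2}\delta'$, and $S,S'\subseteq\{1,\dots,d\}$ with $\#S=\#S'=k$ satisfy $|\langle\omega_{\tau_\delta H},\omega_S\rangle|\ge\epsilon|\omega_{\tau_\delta H}|$ and $|\langle\omega_{\tau_{\delta'}H},\omega_{S'}\rangle|\ge\epsilon|\omega_{\tau_{\delta'}H}|$. Then $c_\ell(S)\ge c_\ell(S')$ for all $\ell=1,\dots,d$.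
   Context: Hilbert dilation system: $X$ finite-dimensional real Hilbert space, $X=\bigoplus_{\nu=1}^mX_\nu$ orthogonal, $\tau_\delta|_{X_\nu}=\delta^{-\nu}\mathrm{id}$; simple means $\dim X_\nu\in\{0,1\}$; the indices $\nu$ with $\dim X_\nu=1$ are $\nu_1<\dots<\nu_d$ and $e_j$ is a unit vector spanning $X_{\nu_j}$. On $\bigwedge^kX$ the inner product is the bilinear extension of $\langle v_1\wedge\dots\wedge v_k,w_1\wedge\dots\wedge w_k\rangle=\det(\langle v_i,w_j\rangle)$. For a $k$-dimensional subspace $W$, $\omega_W=w_1\wedge\dots\wedge w_k$ for some basis $w_1,\dots,w_k$ of $W$ (any choice). For $S\subseteq\{1,\dots,d\}$, $\omega_S=\bigwedge_{j\in S}e_j$ (increasing order) and $c_\ell(S)=\#\{j\in S:j\le\ell\}$. *)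

(* X is modelled as R^d (row vectors 'rV[R]_d) with the
   standard orthonormal basis e_j (j : 'I_d, 0-based), R a real closed field. *)
From mathcomp Require Import all_boot all_order all_algebra.
Set Implicit Arguments. Unset Strict Implicit. Unset Printing Implicit Defensive.
Import Order.TTheory GRing.Theory Num.Theory.
Local Open Scope ring_scope.

Section Defs.
Variables (R : rcfType) (d : nat).

Definition tau (nu : 'I_d -> nat) (delta : R) : 'M[R]_d :=
  diag_mx (\row_j (delta ^- nu j)).

(* For V, W : 'M_(k,d) whose rows are v_1..v_k and w_1..w_k,
   <v_1 /\ .. /\ v_k, w_1 /\ .. /\ w_k> = det(<v_i, w_j>) = det (V W^T). *)
Definition wedge_ip (k : nat) (V W : 'M[R]_(k, d)) : R := \det (V *m W^T).

Definition wedge_norm (k : nat) (V : 'M[R]_(k, d)) : R := Num.sqrt (wedge_ip V V).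

(* Rows e_{s_1}, .., e_{s_k} with s_1 < .. < s_k the elements of S
   (meaningful when #|S| = k); its wedge is omega_S. *)
Definition omegaS (k : nat) (S : {set 'I_d}) : 'M[R]_(k, d) :=
  \matrix_(i < k, j < d) ((val j == nth 0%N [seq val x | x <- enum S] i)%:R).

End Defs.

(* c_l(S) = #{ j in S : j <= l } with 1-based indices; with 0-based
   ordinals this is #{ j in S : val j < l }. *)
Definition cnt (d : nat) (l : nat) (S : {set 'I_d}) : nat :=
  #|[set j in S | (val j < l)%N]|.

From mathcomp Require Import all_boot all_order all_algebra.
From mathcomp Require Import perm ring lra zify.
Set Implicit Arguments. Unset Strict Implicit. Unset Printing Implicit Defensive.
Import Order.TTheory GRing.Theory Num.Theory.
Local Open Scope ring_scope.

(* X = R^d with the standard basis, H the row space of A (k independent rows),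
   tau_dl H the row space of A tau_dl, and all wedge products are computed as
   k x k minors (Cauchy-Binet).

   1. Concentration (wedge_mass_concentrated).  If |<omega_M, omega_S>| is at
      least eps |omega_M|, every vector w of the row space of M satisfies
      eps^2 |w|^2 <= |w restricted to S|^2.  This follows from Cramer's rule,
      which writes each coordinate of w through its coordinates on S with the
      exchanged minors as coefficients, from Cauchy-Schwarz, and from the
      Cauchy-Binet bound on the sum of those squared minors.

   2. Two scales (scale_separation).  Dilating from delta' to delta >=
      eps^-2 delta' shrinks the coordinate of weight nu relative to the others
      geometrically in nu, so no nonzero vector can carry an eps^2-fraction of
      its mass below index l at scale delta' and above l at scale delta.

   If c_l(S) < c_l(S'), a dimension count gives a nonzero combination of the
   rows of A vanishing on (S' above l) u (S below l); by 1. it concentrates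
   above l at scale delta and below l at scale delta', contradicting 2. *)

Section Minors.
Variables (R : comRingType) (k d : nat).
Implicit Types (M : 'M[R]_(k, d)) (f s : 'I_k -> 'I_d).

(* The k x k minor of M formed by the columns f 0, ..., f (k-1), in this
   order; in exterior-algebra terms, a coordinate of the wedge of the rows. *)
Definition minor M f : R := \det (colsub f M).

Definition updf s (i : 'I_k) (j : 'I_d) : 'I_k -> 'I_d :=
  fun t => if t == i then j else s t.

Lemma minor_perm M f (p : 'S_k) :
  minor M (fun a => f (p a)) = (-1) ^+ p * minor M f.
Proof.
rewrite /minor; have -> : colsub (fun a => f (p a)) M = col_perm p (colsub f M).
  by apply/matrixP => i j; rewrite !mxE.
by rewrite col_permE det_mulmx det_perm odd_permV mulrC.
Qed.

Lemma gram_det_expand M :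
  \det (M *m M^T) = \sum_(f : {ffun 'I_k -> 'I_d}) (\prod_a M a (f a)) * minor M f.
Proof.
rewrite /determinant.
transitivity (\sum_(p : 'S_k) \sum_(f : {ffun 'I_k -> 'I_d})
   (-1) ^+ p * \prod_a (M a (f a) * M (p a) (f a))).
  apply: eq_bigr => p _; rewrite -big_distrr /=; congr (_ * _).
  transitivity (\prod_a \sum_c (M a c * M (p a) c)).
    by apply: eq_bigr => a _; rewrite mxE; apply: eq_bigr => c _; rewrite mxE.
  by rewrite bigA_distr_bigA.
rewrite exchange_big; apply: eq_bigr => f _.
rewrite /minor -det_tr /determinant big_distrr /=; apply: eq_bigr => p _.
rewrite big_split /= mulrCA; congr (_ * (_ * _)).
by apply: eq_bigr => a _; rewrite !mxE.
Qed.

(* Cauchy-Binet, summed over all column choices f: every k-subset of columns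
   occurs k! times (with equal squared minors) and non-injective f give 0. *)
Lemma cauchy_binet M :
  (k`!)%:R * \det (M *m M^T) = \sum_(f : {ffun 'I_k -> 'I_d}) minor M f ^+ 2.
Proof.
have leibniz f : minor M f = \sum_(p : 'S_k) (-1) ^+ p * \prod_a M a (f (p a)).
  rewrite /minor /determinant; apply: eq_bigr => p _; congr (_ * _).
  by apply: eq_bigr => a _; rewrite mxE.
rewrite gram_det_expand -(card_Sn k) -sum1_card natr_sum big_distrl /=.
transitivity (\sum_(p : 'S_k) \sum_(f : {ffun 'I_k -> 'I_d})
   (\prod_a M a (f (p a))) * ((-1) ^+ p * minor M f)).
  apply: eq_bigr => p _; rewrite mul1r.
  rewrite (reindex_inj (h := fun f : {ffun 'I_k -> 'I_d} => [ffun a => f (p a)])).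
    apply: eq_bigr => f _; rewrite -minor_perm; congr (_ * _).
      by apply: eq_bigr => a _; rewrite ffunE.
    by rewrite /minor; congr (\det _); apply/matrixP => i j; rewrite !mxE ffunE.
  move=> f g /ffunP fg; apply/ffunP => a.
  by have := fg (p^-1 a)%g; rewrite !ffunE permKV.
rewrite exchange_big; apply: eq_bigr => f _.
rewrite expr2 [X in _ = X * _]leibniz big_distrl /=.
by apply: eq_bigr => p _; rewrite mulrCA mulrA.
Qed.

(* Cramer's rule for a combination w = x M of the rows: minor M s * w_j
   expands along the coordinates w_(s i), with the exchanged minors. *)
Lemma minor_cramer M s (x : 'rV[R]_k) (j : 'I_d) :
  minor M s * (x *m M) 0 j = \sum_i (x *m M) 0 (s i) * minor M (updf s i j).
Proof.
set B := colsub s M; set c := col j M.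
have adjE i : (\adj B *m c) i 0 = minor M (updf s i j).
  rewrite /minor (expand_det_col _ i) mxE; apply: eq_bigr => r _.
  rewrite !mxE /updf eqxx mulrC; congr (_ * _).
  rewrite /cofactor; congr (_ * \det _).
  by apply/matrixP => a b; rewrite !mxE eq_sym (negbTE (neq_lift i b)).
have colE : (x *m M) 0 j = (x *m c) 0 0.
  by rewrite !mxE; apply: eq_bigr => r _; rewrite !mxE.
transitivity (((x *m B) *m (\adj B *m c)) 0 0).
  by rewrite colE mulmxA -(mulmxA x) mul_mx_adj mul_mx_scalar -scalemxAl [in RHS]mxE.
rewrite mxE; apply: eq_bigr => i _.
by rewrite adjE /B mulmx_colsub mxE.
Qed.

End Minors.

Section RealSums.
Variable R : realDomainType.

(* The Cauchy-Schwarz inequality for finite sums, via Lagrange's identity. *)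
Lemma cauchy_schwarz (I : finType) (a b : I -> R) :
  (\sum_i a i * b i) ^+ 2 <= (\sum_i a i ^+ 2) * (\sum_i b i ^+ 2).
Proof.
have lagrange_ge0 : 0 <= \sum_i \sum_j (a i * b j - a j * b i) ^+ 2.
  by apply: sumr_ge0 => i _; apply: sumr_ge0 => j _; exact: sqr_ge0.
have lagrangeE : \sum_i \sum_j (a i * b j - a j * b i) ^+ 2 =
   \sum_i \sum_j (a i ^+ 2 * b j ^+ 2) + \sum_i \sum_j (b i ^+ 2 * a j ^+ 2)
       - 2 * (\sum_i \sum_j ((a i * b i) * (a j * b j))).
  rewrite mulr_sumr -!big_split -sumrB; apply: eq_bigr => i _.
  rewrite mulr_sumr -!big_split -sumrB; apply: eq_bigr => j _ /=; ring.
rewrite lagrangeE -!big_distrlr /= in lagrange_ge0.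
rewrite expr2; lra.
Qed.

Lemma sum_sqr_eq0 n (v : 'rV[R]_n) : \sum_j v 0 j ^+ 2 = 0 -> v = 0.
Proof.
move=> /psumr_eq0P vanish; apply/rowP => j; rewrite mxE.
by apply/eqP; rewrite -sqrf_eq0; apply/eqP/vanish => // i _; exact: sqr_ge0.
Qed.

Lemma ler_sum_support (I : finType) (P Q : pred I) (F : I -> R) :
  (forall j, 0 <= F j) -> (forall j, P j -> Q j \/ F j = 0) ->
  \sum_(j | P j) F j <= \sum_(j | Q j) F j.
Proof.
move=> F_ge0 PQ; rewrite [X in X <= _]big_mkcond [X in _ <= X]big_mkcond.
apply: ler_sum => j _; case: ifP => Pj; case: ifP => Qj //.
by case: (PQ j Pj); [rewrite Qj | move->].
Qed.

Lemma sum_option (X : finType) (G : option X -> R) :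
  \sum_o G o = G None + \sum_x G (Some x).
Proof.
rewrite (bigD1 None) //=; congr (_ + _).
rewrite (reindex_omap (fun x => Some x) id) /=; last by case.
by apply: eq_bigl => x /=; apply/eqP.
Qed.

End RealSums.

Section GramBound.
Variables (R : realDomainType) (k d : nat).
Implicit Type M : 'M[R]_(k, d).
Variable s : 'I_k -> 'I_d.
Hypothesis s_inj : injective s.
Let S := [set s i | i : 'I_k].

Definition perturb (o : option ('I_k * 'I_d)) : 'I_k -> 'I_d :=
  if o is Some (i, j) then updf s i j else s.

Definition admissible (o : option ('I_k * 'I_d)) : bool :=
  if o is Some (i, j) then j \notin S else true.

Let s_in_S t : s t \in S. Proof. exact: imset_f. Qed.

Lemma perturb_inj o : admissible o -> injective (perturb o).
Proof.
case: o => [[i j]|] /= jS a b; last exact: s_inj.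
rewrite /updf; case: (eqVneq a i) => [->|ai]; case: (eqVneq b i) => [->|bi] //.
- by move=> E; move: jS; rewrite E s_in_S.
- by move=> E; move: jS; rewrite -E s_in_S.
- exact: s_inj.
Qed.

Lemma perturb_perm_inj (p p' : 'S_k) o o' : admissible o -> admissible o' ->
  (forall a, perturb o (p a) = perturb o' (p' a)) -> o = o' /\ p = p'.
Proof.
move=> adm_o adm_o' E.
suff oo' : o = o'.
  by split=> //; subst o'; apply/permP => a; exact: (perturb_inj adm_o (E a)).
case: o adm_o E => [[i j]|]; case: o' adm_o' => [[i' j']|] //= jS' jS E.
- have E1 := E (p'^-1 i')%g; rewrite /= permKV /updf eqxx in E1.
  move: E1; case: (eqVneq (p (p'^-1 i')%g) i) => [_ ->|_ E1]; last first.
    by move: jS'; rewrite -E1 s_in_S.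
  case: (eqVneq i i') => [<-//|ii'].
  have E2 := E (p^-1 i')%g; rewrite /= permKV /updf eq_sym (negbTE ii') in E2.
  move: E2; case: (eqVneq (p' (p^-1 i')%g) i') => [_ E2|ne /s_inj E2].
    by move: jS'; rewrite -E2 s_in_S.
  by move: ne; rewrite -E2 eqxx.
- by have := E (p^-1 i)%g; rewrite /= permKV /updf eqxx => E1; move: jS; rewrite E1 s_in_S.
- by have := E (p'^-1 i')%g; rewrite /= permKV /updf eqxx => E1; move: jS'; rewrite -E1 s_in_S.
Qed.

(* The squared minors at s and at its admissible single exchanges are
   distinct terms of the Cauchy-Binet sum, so together they are bounded by
   the Gram determinant. *)
Lemma minor_sq_bound M :
  minor M s ^+ 2 + \sum_(j | j \notin S) \sum_i minor M (updf s i j) ^+ 2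
  <= \det (M *m M^T).
Proof.
have fact_gt0 : 0 < (k`!)%:R :> R by rewrite ltr0n fact_gt0.
rewrite -(ler_pM2l fact_gt0) cauchy_binet.
pose Phi (p : 'S_k * option ('I_k * 'I_d)) : {ffun 'I_k -> 'I_d} :=
  [ffun a => perturb p.2 (p.1 a)].
pose A := [pred p : 'S_k * option ('I_k * 'I_d) | admissible p.2].
have Phi_inj : {in A &, injective Phi}.
  move=> [p o] [p' o'] /= adm adm' /ffunP E.
  have [-> ->] : o = o' /\ p = p'.
    by apply: perturb_perm_inj => // a; have := E a; rewrite !ffunE.
  by [].
have minor_Phi p o : minor M (Phi (p, o)) ^+ 2 = minor M (perturb o) ^+ 2.
  have -> : minor M (Phi (p, o)) = minor M (fun a => perturb o (p a)).
    by rewrite /minor; congr (\det _); apply/matrixP => i j; rewrite !mxE ffunE.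
  by rewrite minor_perm exprMn sqrr_sign mul1r.
apply: le_trans (_ : \sum_(f in Phi @: A) minor M f ^+ 2 <= _); last first.
  rewrite [X in _ <= X](bigID (fun f => f \in Phi @: A)) /= lerDl.
  by apply: sumr_ge0 => f _; exact: sqr_ge0.
rewrite big_imset //= -(card_Sn k) -sum1_card natr_sum big_distrl /=.
rewrite le_eqVlt; apply/orP; left; apply/eqP.
transitivity (\sum_(p : 'S_k) \sum_(o | admissible o) minor M (Phi (p, o)) ^+ 2); last first.
  by rewrite (pair_big_dep xpredT (fun _ o => admissible o)); apply: eq_bigl => p.
apply: eq_bigr => p _; rewrite mul1r.
rewrite (eq_bigr (fun o => minor M (perturb o) ^+ 2)); last by move=> o _.
rewrite [RHS]big_mkcond sum_option /=; congr (_ + _).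
rewrite (exchange_big_dep xpredT) //=.
rewrite (pair_big_dep xpredT (fun _ j => (j \notin S) && true)) /= big_mkcond.
by apply: eq_bigr => [[i j]] _ /=; rewrite andbT.
Qed.

(* Consequence of Cramer's rule and Cauchy-Schwarz: a combination w = x M of
   the rows is controlled by its coordinates on S,
   minor(s)^2 |w|^2 <= |w on S|^2 det (M M^T). *)
Lemma row_mass_bound M (x : 'rV[R]_k) :
  minor M s ^+ 2 * \sum_j (x *m M) 0 j ^+ 2 <=
  (\sum_(j in S) (x *m M) 0 j ^+ 2) * \det (M *m M^T).
Proof.
set w := x *m M.
set WS := \sum_(j in S) w 0 j ^+ 2.
set T := \sum_(j | j \notin S) \sum_i minor M (updf s i j) ^+ 2.
have WSE : WS = \sum_i w 0 (s i) ^+ 2.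
  by rewrite /WS big_imset //= => a b _ _; exact: s_inj.
have WS_ge0 : 0 <= WS by apply: sumr_ge0 => i _; exact: sqr_ge0.
have outside : minor M s ^+ 2 * \sum_(j | j \notin S) w 0 j ^+ 2 <= WS * T.
  rewrite mulr_sumr /T mulr_sumr; apply: ler_sum => j _.
  by rewrite -exprMn minor_cramer WSE; exact: cauchy_schwarz.
rewrite (bigID (fun j => j \in S)) /= -/WS mulrDr.
apply: le_trans (_ : WS * (minor M s ^+ 2 + T) <= _); last first.
  by apply: ler_wpM2l => //; exact: minor_sq_bound.
by rewrite mulrDr mulrC; exact: lerD.
Qed.

End GramBound.

Lemma gram_det_gt0 (R : realFieldType) (k d : nat) (M : 'M[R]_(k, d)) :
  row_free M -> 0 < \det (M *m M^T).
Proof.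
move=> M_free.
have fact_gt0 : 0 < (k`!)%:R :> R by rewrite ltr0n fact_gt0.
have G_ge0 : 0 <= \det (M *m M^T).
  rewrite -(pmulr_rge0 _ fact_gt0) cauchy_binet.
  by apply: sumr_ge0 => f _; exact: sqr_ge0.
rewrite lt_def G_ge0 andbT -unitfE -unitmxE -row_free_unit.
apply: inj_row_free => v vG; apply: (row_free_inj M_free); rewrite mul0mx.
apply: sum_sqr_eq0.
have : ((v *m M) *m (v *m M)^T) 0 0 = 0.
  by rewrite trmx_mul mulmxA -(mulmxA v) vG mul0mx mxE.
rewrite mxE => norm0; rewrite -[RHS]norm0; apply: eq_bigr => j _.
by rewrite [(v *m M)^T _ _]mxE expr2.
Qed.

(* Quantitative form of "the coordinate projection onto S is injective on
   the row space of M": if the minor on the columns s carries an eps-fraction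
   of the norm of the wedge of the rows, then every combination w = x M
   carries an eps^2-fraction of its squared norm on the coordinates s. *)
Lemma row_mass_concentrated (R : rcfType) (k d : nat) (M : 'M[R]_(k, d))
    (s : 'I_k -> 'I_d) (eps : R) (x : 'rV[R]_k) :
  injective s -> 0 < eps -> 0 < \det (M *m M^T) ->
  eps * Num.sqrt (\det (M *m M^T)) <= `|minor M s| ->
  eps ^+ 2 * \sum_j (x *m M) 0 j ^+ 2 <= \sum_(j in [set s i | i : 'I_k]) (x *m M) 0 j ^+ 2.
Proof.
move=> s_inj eps_gt0 G_gt0 large_minor.
have sq_minor : eps ^+ 2 * \det (M *m M^T) <= minor M s ^+ 2.
  have lhs_ge0 : 0 <= eps * Num.sqrt (\det (M *m M^T)).
    by rewrite mulr_ge0 ?sqrtr_ge0 // ltW.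
  have := ler_pM lhs_ge0 lhs_ge0 large_minor large_minor; rewrite -!expr2.
  by rewrite exprMn (sqr_sqrtr (ltW G_gt0)) real_normK ?num_real.
have W_ge0 : 0 <= \sum_j (x *m M) 0 j ^+ 2 by apply: sumr_ge0 => j _; exact: sqr_ge0.
rewrite -(ler_pM2r G_gt0); apply: le_trans (row_mass_bound s_inj M x).
by rewrite mulrAC; exact: ler_wpM2r.
Qed.

Lemma set_enum (k d : nat) (S : {set 'I_d}) : #|S| = k ->
  exists s : 'I_k -> 'I_d, [/\ injective s, [set s i | i : 'I_k] = S &
     forall i : 'I_k, val (s i) = nth 0%N [seq val x | x <- enum S] i].
Proof.
move=> cardS; exists (fun i => enum_val (cast_ord (esym cardS) i)); split.
- by move=> a b /enum_val_inj /cast_ord_inj.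
- apply/setP => j; apply/imsetP/idP => [[i _ ->]|jS]; first exact: enum_valP.
  by exists (cast_ord cardS (enum_rank_in jS j)) => //; rewrite cast_ordK enum_rankK_in.
- move=> i; set i' := cast_ord (esym cardS) i; have x0 := enum_val i'.
  rewrite (enum_val_nth x0) (nth_map x0 0%N) //.
  by rewrite -cardE; exact: (ltn_ord i').
Qed.

Lemma wedge_ip_omegaS (R : rcfType) (k d : nat) (M : 'M[R]_(k, d)) (S : {set 'I_d})
    (s : 'I_k -> 'I_d) :
  injective s -> (forall i : 'I_k, val (s i) = nth 0%N [seq val x | x <- enum S] i) ->
  wedge_ip M (omegaS R k S) = minor M s.
Proof.
move=> s_inj sE; rewrite /wedge_ip /minor; congr (\det _).
apply/matrixP => a b; rewrite !mxE (bigD1 (s b)) //= big1 => [|c cb].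
  by rewrite !mxE -sE eqxx mulr1 addr0.
by rewrite !mxE -sE (inj_eq val_inj) (negbTE cb) mulr0.
Qed.

Lemma wedge_mass_concentrated (R : rcfType) (k d : nat) (M : 'M[R]_(k, d))
    (S : {set 'I_d}) (eps : R) (x : 'rV[R]_k) :
  row_free M -> #|S| = k -> 0 < eps ->
  eps * wedge_norm M <= `|wedge_ip M (omegaS R k S)| ->
  eps ^+ 2 * \sum_j (x *m M) 0 j ^+ 2 <= \sum_(j in S) (x *m M) 0 j ^+ 2.
Proof.
move=> M_free cardS eps_gt0; have [s [s_inj <- sE]] := set_enum cardS.
rewrite /wedge_norm (wedge_ip_omegaS _ s_inj sE) => large_minor.
exact: row_mass_concentrated (gram_det_gt0 M_free) large_minor.
Qed.

Lemma exists_vanishing_combination (R : fieldType) (k d : nat) (A : 'M[R]_(k, d))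
    (Z : {set 'I_d}) :
  (#|Z| < k)%N -> exists2 x : 'rV[R]_k, x != 0 & forall z, z \in Z -> (x *m A) 0 z = 0.
Proof.
move=> card_Z.
pose E := colsub (@enum_val _ (mem Z)) A.
have K_neq0 : kermx E != 0.
  rewrite -mxrank_eq0 mxrank_ker subn_eq0 -ltnNge.
  exact: leq_ltn_trans (rank_leq_col E) card_Z.
have [i Ki] : exists i, row i (kermx E) != 0.
  apply/existsP; rewrite -negb_forall; apply: contra K_neq0 => /forallP K0.
  by apply/eqP/row_matrixP => i; rewrite row0; apply/eqP/K0.
exists (row i (kermx E)) => // z zZ.
have : row i (kermx E) *m E = 0 by rewrite -row_mul mulmx_ker row0.
rewrite mulmx_colsub => /matrixP/(_ 0 (enum_rank_in zZ z)).
by rewrite !mxE enum_rankK_in.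
Qed.

Lemma tau_coord (R : rcfType) (d k : nat) (nu : 'I_d -> nat) (A : 'M[R]_(k, d))
    (x : 'rV[R]_k) (dl : R) (j : 'I_d) :
  (x *m (A *m tau nu dl)) 0 j = (x *m A) 0 j * dl ^- nu j.
Proof. by rewrite mulmxA /tau mul_mx_diag mxE [(\row__ _) _ _]mxE. Qed.

Lemma row_free_tau (R : rcfType) (d k : nat) (nu : 'I_d -> nat) (A : 'M[R]_(k, d))
    (dl : R) :
  dl != 0 -> row_free A -> row_free (A *m tau nu dl).
Proof.
move=> dl_neq0 A_free; apply: inj_row_free => v vAt0.
apply: (row_free_inj A_free); rewrite mul0mx; apply/rowP => j.
have /eqP := congr1 (fun m : 'rV_d => m 0 j) vAt0; rewrite /= tau_coord !mxE.
by rewrite mulf_eq0 invr_eq0 expf_eq0 (negbTE dl_neq0) andbF orbF => /eqP.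
Qed.

Lemma scale_change (R : fieldType) (a dl dl' : R) (n : nat) :
  dl' != 0 -> a * dl ^- n = a * dl' ^- n * (dl' / dl) ^+ n.
Proof.
by move=> dl'_neq0; rewrite expr_div_n -mulrA mulKf // expf_neq0.
Qed.

Lemma mono_ltn (d : nat) (nu : 'I_d -> nat) :
  (forall i j : 'I_d, (i < j)%N -> (nu i < nu j)%N) ->
  forall i j : 'I_d, (nu i < nu j)%N = (i < j)%N.
Proof.
move=> nu_mono i j; case: (ltngtP i j) => [/nu_mono -> //|/nu_mono ji|/val_inj -> ].
- by apply/negbTE; rewrite -leqNgt ltnW.
- by rewrite ltnn.
Qed.

(* Elementary inequalities behind the two-scale argument: an e-fraction of
   the mass of the first vector lies high (WU), an e-fraction of the mass of
   the second lies low (WL'), and passing from the second to the first shrinks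
   high weights by P and low ones by a further factor e^2 relative to P. *)
Lemma two_scale_arith (R : realFieldType) (e WL WU WL' WU' P : R) :
  0 < e -> e < 1 -> 0 <= WL -> 0 <= WU -> 0 <= WL' -> 0 <= WU' -> 0 <= P ->
  e * (WL + WU) <= WU -> e * (WL' + WU') <= WL' ->
  WU <= P * WU' -> P * WL' <= e ^+ 2 * WL -> WL + WU = 0.
Proof.
move=> e_gt0 e_lt1 WL_ge0 WU_ge0 WL'_ge0 WU'_ge0 P_ge0 highU lowL' shrinkU shrinkL.
have low_dominates' : e * WU' <= (1 - e) * WL' by lra.
have high_small : e * WU <= e * ((1 - e) * e * WL).
  apply: le_trans (_ : e * (P * WU') <= _); first by apply: ler_wpM2l => //; exact: ltW.
  have -> : e * (P * WU') = P * (e * WU') by ring.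
  apply: le_trans (_ : P * ((1 - e) * WL') <= _); first exact: ler_wpM2l.
  have -> : P * ((1 - e) * WL') = (1 - e) * (P * WL') by ring.
  have -> : e * ((1 - e) * e * WL) = (1 - e) * (e ^+ 2 * WL) by ring.
  by apply: ler_wpM2l => //; lra.
have {}high_small : WU <= (1 - e) * e * WL by rewrite -(ler_pM2l e_gt0).
have low_small : e * WL <= (1 - e) * ((1 - e) * e * WL).
  apply: le_trans (_ : (1 - e) * WU <= _); first lra.
  by apply: ler_wpM2l => //; lra.
have c_gt0 : 0 < e * (e * (2 - e)) by rewrite !mulr_gt0 //; lra.
have : WL * (e * (e * (2 - e))) <= 0 by nra.
rewrite pmulr_lle0 // => WL_le0.
have : WU <= 0 by nra.
lra.
Qed.

(* F' are the squared coordinates of a vector and F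
   those of its image after shrinking the coordinate of weight nu j by q^(nu j),
   where q <= e^2.  If F' puts an e-fraction of its mass on the low weights
   (nu j < N) while F puts an e-fraction of its mass on the high weights, F
   vanishes. *)
Lemma scale_separation (R : realFieldType) (d : nat) (nu : 'I_d -> nat)
    (low : pred 'I_d) (N : nat) (e q : R) (F F' : 'I_d -> R) :
  0 < e -> e < 1 -> 0 <= q -> q <= e ^+ 2 ->
  (forall j, low j -> (nu j < N)%N) -> (forall j, ~~ low j -> (N <= nu j)%N) ->
  (forall j, 0 <= F' j) -> (forall j, F j = F' j * q ^+ nu j) ->
  e * \sum_j F j <= \sum_(j | ~~ low j) F j ->
  e * \sum_j F' j <= \sum_(j | low j) F' j ->
  \sum_j F j = 0.
Proof.
move=> e_gt0 e_lt1 q_ge0 q_le low_lt high_ge F'_ge0 FE highF lowF'.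
have q_le1 : q <= 1 by apply: le_trans q_le _; rewrite expr_le1 ?ltW.
have F_ge0 j : 0 <= F j by rewrite FE mulr_ge0 ?exprn_ge0.
rewrite (bigID low) /= in highF *; rewrite (bigID low) /= in lowF'.
apply: two_scale_arith (e_gt0) (e_lt1) _ _ _ _ (exprn_ge0 N q_ge0) highF lowF' _ _.
1-4: by apply: sumr_ge0.
- rewrite mulr_sumr; apply: ler_sum => j /high_ge j_high.
  by rewrite FE mulrC; apply: ler_wpM2r => //; exact: ler_wiXn2l.
- rewrite !mulr_sumr; apply: ler_sum => j /low_lt j_low.
  have pow_le : q ^+ N <= e ^+ 2 * q ^+ nu j.
    apply: le_trans (ler_wiXn2l q_ge0 q_le1 j_low) _.
    by rewrite exprSr mulrC ler_wpM2r ?exprn_ge0.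
  by rewrite FE mulrCA mulrC; apply: ler_wpM2l.
Qed.

Lemma cnt_le_card (d l : nat) (S : {set 'I_d}) : (cnt l S <= #|S|)%N.
Proof. by apply: subset_leq_card; apply/subsetP => j; rewrite inE => /andP[]. Qed.

Lemma cnt_full (d l : nat) (S : {set 'I_d}) : (d <= l)%N -> cnt l S = #|S|.
Proof.
move=> le_dl; apply: eq_card => j; rewrite inE andb_idr // => _.
exact: leq_trans (ltn_ord j) le_dl.
Qed.

Lemma card_cross (T : finType) (P : pred T) (S S' : {set T}) :
  #|S| = #|S'| -> (#|[set j in S | P j]| < #|[set j in S' | P j]|)%N ->
  (#|[set j in S' | ~~ P j] :|: [set j in S | P j]| < #|S'|)%N.
Proof.
move=> cardSS' lt_P.
have split_S' : (#|[set j in S' | P j]| + #|[set j in S' | ~~ P j]|)%N = #|S'|.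
  rewrite -(cardsID [set j | P j] S'); congr (_ + _)%N; apply: eq_card => j;
    by rewrite !inE; case: (j \in S'); case: (P j).
by move: lt_P; rewrite cardsU; lia.
Qed.
Lemma tau_coord_rescale (R : rcfType) (d k : nat) (nu : 'I_d -> nat)
    (A : 'M[R]_(k, d)) (x : 'rV[R]_k) (dl dl' : R) (j : 'I_d) :
  dl' != 0 ->
  (x *m (A *m tau nu dl)) 0 j ^+ 2 =
  (x *m (A *m tau nu dl')) 0 j ^+ 2 * ((dl' / dl) ^+ 2) ^+ nu j.
Proof.
by move=> dl'_neq0; rewrite !tau_coord (scale_change _ dl _ dl'_neq0) -exprAC -exprMn.
Qed.

Lemma dilation_ratio_le (R : realFieldType) (eps delta delta' : R) :
  0 < eps -> 0 < delta -> 0 < delta' -> eps ^- 2 * delta' <= delta ->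
  (delta' / delta) ^+ 2 <= (eps ^+ 2) ^+ 2.
Proof.
move=> eps_gt0 dl_gt0 dl'_gt0 dl_ge.
have ratio_le : delta' / delta <= eps ^+ 2.
  rewrite ler_pdivrMr //; apply: le_trans (ler_wpM2l (exprn_ge0 2 (ltW eps_gt0)) dl_ge).
  by rewrite mulrA mulfV ?mul1r // expf_neq0 // lt0r_neq0.
rewrite [X in X <= _]expr2 [X in _ <= X]expr2.
by apply: (ler_pM _ _ ratio_le ratio_le); rewrite divr_ge0 ?ltW.
Qed.

Lemma dilated_mass_concentrated (R : rcfType) (d k : nat) (nu : 'I_d -> nat)
    (A : 'M[R]_(k, d)) (x : 'rV[R]_k) (eps dl : R) (T : {set 'I_d}) (P : pred 'I_d) :
  row_free A -> 0 < dl -> #|T| = k -> 0 < eps ->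
  eps * wedge_norm (A *m tau nu dl) <= `|wedge_ip (A *m tau nu dl) (omegaS R k T)| ->
  (forall j, j \in T -> P j \/ (x *m A) 0 j = 0) ->
  eps ^+ 2 * \sum_j (x *m (A *m tau nu dl)) 0 j ^+ 2 <=
  \sum_(j | P j) (x *m (A *m tau nu dl)) 0 j ^+ 2.
Proof.
move=> A_free dl_gt0 cardT eps_gt0 wedgeT TP.
have At_free := row_free_tau nu (lt0r_neq0 dl_gt0) A_free.
apply: le_trans (wedge_mass_concentrated x At_free cardT eps_gt0 wedgeT) _.
apply: ler_sum_support => [j|j /TP [Pj|xAj]]; [exact: sqr_ge0 | by left | right].
by rewrite tau_coord xAj mul0r expr0n.
Qed.

Unset Implicit Arguments.

Theorem lemma4p5 (R : rcfType) (d k : nat) (nu : 'I_d -> nat)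
  (A : 'M[R]_(k, d)) (eps delta delta' : R) (S S' : {set 'I_d}) :
  (forall j : 'I_d, (0 < nu j)%N) ->
  (forall i j : 'I_d, (i < j)%N -> (nu i < nu j)%N) ->
  (1 <= k <= d)%N ->
  row_free A ->
  0 < eps -> eps < 1 / 2 ->
  0 < delta -> 0 < delta' ->
  delta >= eps ^- 2 * delta' ->
  #|S| = k -> #|S'| = k ->
  `|wedge_ip (A *m tau nu delta) (omegaS R k S)| >= eps * wedge_norm (A *m tau nu delta) ->
  `|wedge_ip (A *m tau nu delta') (omegaS R k S')| >= eps * wedge_norm (A *m tau nu delta') ->
  forall l : nat, (1 <= l <= d)%N -> (cnt l S >= cnt l S')%N.
Proof.
move=> _ nu_mono _ A_free eps_gt0 eps_lt dl_gt0 dl'_gt0 dl_ge cardS cardS' wedgeS wedgeS'.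
move=> l /andP[_ le_ld]; rewrite leqNgt; apply/negP => cnt_lt.
have l_lt_d : (l < d)%N.
  rewrite ltnNge; apply: contraL cnt_lt => le_dl.
  by rewrite -leqNgt (cnt_full S le_dl) cardS -cardS' cnt_le_card.
pose low (j : 'I_d) := (val j < l)%N; pose o : 'I_d := Ordinal l_lt_d.
pose Z := [set j in S' | ~~ low j] :|: [set j in S | low j].
have card_Z : (#|Z| < k)%N by rewrite -cardS'; apply: card_cross; rewrite ?cardS.
have [x x_neq0 xZ] := exists_vanishing_combination A card_Z.
have high_mass := dilated_mass_concentrated (x := x) (P := fun j => ~~ low j)
  A_free dl_gt0 cardS eps_gt0 wedgeS.
have low_mass := dilated_mass_concentrated (x := x) (P := low)
  A_free dl'_gt0 cardS' eps_gt0 wedgeS'.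
have eps2_lt1 : eps ^+ 2 < 1.
  by rewrite expr_lt1 ?ltW //; apply: lt_trans eps_lt _; rewrite ltr_pdivrMr //; lra.
pose F dl j := (x *m (A *m tau nu dl)) 0 j ^+ 2.
have : \sum_j F delta j = 0.
  apply: (scale_separation (nu := nu) (low := low) (N := nu o) (F' := F delta')
    (exprn_gt0 2 eps_gt0) eps2_lt1 (sqr_ge0 _) (dilation_ratio_le eps_gt0 dl_gt0 dl'_gt0 dl_ge))
    => [j|j|j|j||].
  - by rewrite (mono_ltn nu_mono).
  - by rewrite leqNgt (mono_ltn nu_mono).
  - exact: sqr_ge0.
  - exact: tau_coord_rescale (lt0r_neq0 dl'_gt0).
  - apply: high_mass => j jS; case: (boolP (low j)) => [j_low|]; last by left.
    by right; apply: xZ; rewrite !inE jS j_low orbT.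
  - apply: low_mass => j jS'; case: (boolP (low j)) => [|j_high]; first by left.
    by right; apply: xZ; rewrite !inE jS' j_high.
move/sum_sqr_eq0/eqP.
by rewrite (mulmx_free_eq0 _ (row_free_tau nu (lt0r_neq0 dl_gt0) A_free)); apply/negP.
Qed.
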